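(* There is no lifting, with respect to the functor $\operatorname{Con}_c$, of the diagram $\mathcal D_c$ by a diagram of lattices and lattice homomorphisms in which the three lattices $K_0,K_1,K_2$ corresponding to $S_0,S_1,S_2$ have permutable congruences.
   Context: Posets are viewed as categories (one morphism $p\to q$ iff $p\leq q$); a $P$-diagram in a category is a functor from $P$. $\operatorname{Con}_c$ is the functor sending a lattice $L$ to its $\{\vee,0\}$-semilattice of compact (finitely generated) congruences, and a lattice homomorphism $f\colon K\to L$ to the map sending a compact congruence $\alpha$ of $K$ to the congruence of $L$ generated by $\{(f(x),f(y)):(x,y)\in\alpha\}$. A $P$-diagram $\mathcal L$ of lattices and lattice homomorphisms lifts a $P$-diagram $\mathcal S$ of distributive $\{\vee,0\}$-semilattices if $\operatorname{Con}_c\circ\mathcal L$ and $\mathcal S$ are naturally isomorphic. The diagram $\mathcal D_c$ is indexed by the cube $\mathcal P(\{0,1,2\})$ ordered by inclusion. Let $U=\mathcal P(\{0,1,2,3,4\})$ with union as join and $\varnothing$ as zero. Put $\xi_0=\{0,4\},\xi_1=\{3\},\xi_2=\{2\},\xi_3=\{1,4\}$; $\eta_0=\{0,4\},\eta_1=\{1,4\},\eta_2=\{2\},\eta_3=\{3,4\}$; $\zeta_0=\{0,4\},\zeta_1=\{1\},\zeta_2=\{3\},\zeta_3=\{2,4\}$; $\alpha_0=\{0,1,4\},\beta_0=\{2,3,4\}$; $\alpha_1=\{0,3,4\},\beta_1=\{1,2,4\}$; $\alpha_2=\{0,2,4\},\beta_2=\{1,3,4\}$. Let $T_0$ (resp.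 $T_1$, $T_2$) be the $\{\vee,0\}$-subsemilattice of $U$ generated by the $\xi_j$ (resp. $\eta_j$, $\zeta_j$), $j<4$; let $S_i$ ($i<3$) be the $\{\vee,0\}$-subsemilattice generated by $\{\alpha_i,\beta_i\}$; let $\mathbf 2=\{\varnothing,\{0,1,2,3,4\}\}$. Then $\mathcal D_c$ assigns $\mathbf 2$ to $\varnothing$, $S_i$ to $\{i\}$, $T_j$ to $\{0,1,2\}\setminus\{j\}$, $U$ to $\{0,1,2\}$, and all maps are inclusions (note $\mathbf 2\subseteq S_i\subseteq T_j\subseteq U$ for $i\neq j$). *)

From HB Require Import structures.
From mathcomp Require Import all_boot all_order.
Set Implicit Arguments. Unset Strict Implicit. Unset Printing Implicit Defensive.
Import Order.TTheory.

Section Congruences.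
Variables (d : Order.disp_t) (T : latticeType d).

Definition is_congruence (th : T -> T -> Prop) : Prop :=
  [/\ (forall x, th x x),
      (forall x y, th x y -> th y x),
      (forall x y z, th x y -> th y z -> th x z) &
      (forall x y x' y', th x x' -> th y y' ->
         th (Order.meet x y) (Order.meet x' y') /\
         th (Order.join x y) (Order.join x' y'))].

Definition Cg (R : T -> T -> Prop) : T -> T -> Prop :=
  fun x y => forall C, is_congruence C -> (forall u v, R u v -> C u v) -> C x y.

Definition compact_con (th : T -> T -> Prop) : Prop :=
  exists s : seq (T * T), th = Cg (fun u v => (u, v) \in s).

Definition con_zero : T -> T -> Prop := fun x y => x = y.
Definition con_join (th eta : T -> T -> Prop) : T -> T -> Prop :=
  Cg (fun x y => th x y \/ eta x y).

Definition permutable_congruences : Prop :=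
  forall a b : T -> T -> Prop, is_congruence a -> is_congruence b ->
    forall x y, (exists z, a x z /\ b z y) <-> (exists z, b x z /\ a z y).
End Congruences.

Definition con_map (d d' : Order.disp_t) (K : latticeType d) (L : latticeType d')
  (f : K -> L) (th : K -> K -> Prop) : L -> L -> Prop :=
  Cg (fun u v => exists x y, th x y /\ u = f x /\ v = f y).

Definition lattice_hom (d d' : Order.disp_t) (K : latticeType d) (L : latticeType d')
  (f : K -> L) : Prop :=
  forall x y, f (Order.meet x y) = Order.meet (f x) (f y) /\
              f (Order.join x y) = Order.join (f x) (f y).

Definition s5 (l : seq nat) : {set 'I_5} := [set x : 'I_5 | nat_of_ord x \in l].

(* {\/,0}-subsemilattice of U generated by G: all finite unions *)
Definition span (G : {set {set 'I_5}}) : {set {set 'I_5}} :=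
  [set \bigcup_(X in A) X | A : {set {set 'I_5}} in powerset G].

Definition gS (i : 'I_3) : {set {set 'I_5}} :=
  match nat_of_ord i with
  | 0 => [set s5 [:: 0; 1; 4]; s5 [:: 2; 3; 4]]
  | 1 => [set s5 [:: 0; 3; 4]; s5 [:: 1; 2; 4]]
  | _ => [set s5 [:: 0; 2; 4]; s5 [:: 1; 3; 4]]
  end.

Definition gT (j : 'I_3) : {set {set 'I_5}} :=
  match nat_of_ord j with
  | 0 => [set s5 [:: 0; 4]; s5 [:: 3]; s5 [:: 2]; s5 [:: 1; 4]]
  | 1 => [set s5 [:: 0; 4]; s5 [:: 1; 4]; s5 [:: 2]; s5 [:: 3; 4]]
  | _ => [set s5 [:: 0; 4]; s5 [:: 1]; s5 [:: 3]; s5 [:: 2; 4]]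
  end.

(* D_c p, as a subset of U (all maps of D_c are inclusions) *)
Definition DC (p : {set 'I_3}) : {set {set 'I_5}} :=
  if p == set0 then [set set0; setT]
  else if p == setT then setT
  else if #|p| == 1 then span (\bigcup_(i in p) gS i)   (* S_i, p = {i} *)
  else span (\bigcup_(j in ~: p) gT j).                 (* T_j, p = {0,1,2}\{j} *)

(* Pick u <> v in the bottom lattice and let A, B be their images in the top
   lattice.  Transport Theta(x, y) to a subset D(x, y) of {0,...,4}: D is
   symmetric, satisfies D(x, z) <= D(x, y) \/ D(y, z), and D(A, B) is all of
   {0,...,4}.  In K_i, Theta(u, v) lies below the join of the congruences
   corresponding to alpha_i and beta_i; since these permute, their composite is
   already a congruence, which yields a point with image C_i such that
   D(A, C_i) <= alpha_i and D(C_i, B) <= beta_i.  Also D(C_i, C_j) lies in T_k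
   for k distinct from i and j.  Chasing the coordinates 0, 1, 2, 4 through the
   triangle inequality and the shapes of T_0, T_1, T_2 shows 1 \notin D(A, B). *)

From Stdlib Require Import FunctionalExtensionality PropExtensionality Classical.
From HB Require Import structures.
From mathcomp Require Import all_boot all_order.
Set Implicit Arguments. Unset Strict Implicit. Unset Printing Implicit Defensive.

Section Congruences.
Context {d : Order.disp_t} {T : latticeType d}.
Implicit Types (R C a b th eta : T -> T -> Prop) (x y z : T).

Lemma rel_ext (r s : T -> T -> Prop) : (forall x y, r x y <-> s x y) -> r = s.
Proof.
move=> rs; apply: functional_extensionality => x.
by apply: functional_extensionality => y; apply: propositional_extensionality.
Qed.

Lemma cong_refl C x : is_congruence C -> C x x.
Proof. by case=> refl _ _ _; exact: refl. Qed.

Lemma cong_sym C x y : is_congruence C -> C x y -> C y x.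
Proof. by case=> _ sym _ _; exact: sym. Qed.

Lemma cong_trans C x y z : is_congruence C -> C x y -> C y z -> C x z.
Proof. by case=> _ _ trans _; exact: trans. Qed.

Lemma Cg_gen R x y : R x y -> Cg R x y.
Proof. by move=> Rxy C _ /(_ x y Rxy). Qed.

Lemma Cg_min R C : is_congruence C -> (forall u v, R u v -> C u v) ->
  forall x y, Cg R x y -> C x y.
Proof. by move=> congC RC x y /(_ C congC RC). Qed.

Lemma Cg_cong R : is_congruence (Cg R).
Proof.
split.
- by move=> x C congC _; exact: cong_refl.
- by move=> x y Rxy C congC RC; apply: cong_sym congC (Rxy C congC RC).
- by move=> x y z Rxy Ryz C congC RC; apply: cong_trans congC (Rxy C congC RC) (Ryz C congC RC).
- move=> x y x' y' Rxx' Ryy'; split=> C congC RC; case: (congC) => _ _ _ comp;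
  by have [] := comp x y x' y' (Rxx' C congC RC) (Ryy' C congC RC).
Qed.

Lemma compact_con_cong th : compact_con th -> is_congruence th.
Proof. by case=> s ->; exact: Cg_cong. Qed.

Lemma con_zero_compact : compact_con (@con_zero _ T).
Proof.
have zero_cong : is_congruence (@con_zero _ T).
  by split=> [x|x y ->|x y z -> ->|x y x' y' -> ->].
exists [::]; apply: rel_ext => x y; split=> [<- | ]; first exact: cong_refl (Cg_cong _).
by apply: Cg_min zero_cong _ x y => u v; rewrite in_nil.
Qed.

Lemma con_join_compact th eta :
  compact_con th -> compact_con eta -> compact_con (con_join th eta).
Proof.
move=> [s ->] [t ->]; exists (s ++ t); apply: rel_ext => x y; split.
- apply: Cg_min (Cg_cong _) _ x y => u v [] uv;
  by apply: Cg_min (Cg_cong _) _ u v uv => a b ab; apply: Cg_gen; rewrite mem_cat ab ?orbT.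
- apply: Cg_min (Cg_cong _) _ x y => u v; rewrite mem_cat => /orP[] uv.
  + by apply: Cg_gen; left; exact: Cg_gen.
  + by apply: Cg_gen; right; exact: Cg_gen.
Qed.

Lemma con_join_l th eta x y : th x y -> con_join th eta x y.
Proof. by move=> thxy; apply: Cg_gen; left. Qed.

Lemma con_join_r th eta x y : eta x y -> con_join th eta x y.
Proof. by move=> etaxy; apply: Cg_gen; right. Qed.

Lemma con_join_idPr th eta : is_congruence eta ->
  (forall x y, th x y -> eta x y) -> con_join th eta = eta.
Proof.
move=> congE thE; apply: rel_ext => x y; split; last exact: con_join_r.
by apply: Cg_min congE _ x y => u v [/thE|].
Qed.

Definition Theta x y : T -> T -> Prop := Cg (fun u v => (u, v) \in [:: (x, y)]).

Lemma Theta_cong x y : is_congruence (Theta x y).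
Proof. exact: Cg_cong. Qed.

Lemma Theta_compact x y : compact_con (Theta x y).
Proof. by exists [:: (x, y)]. Qed.

Lemma Theta_self x y : Theta x y x y.
Proof. by apply: Cg_gen; rewrite mem_seq1. Qed.

Lemma Theta_min C x y : is_congruence C -> C x y ->
  forall u v, Theta x y u v -> C u v.
Proof. by move=> congC Cxy; apply: Cg_min congC _ => u v; rewrite mem_seq1 => /eqP[-> ->]. Qed.

Lemma Theta_sym x y : Theta x y = Theta y x.
Proof.
have le_sym u v s t : Theta u v s t -> Theta v u s t.
  apply: Theta_min (Theta_cong v u) _ s t.
  by apply: cong_sym (Theta_cong v u) _; exact: Theta_self.
by apply: rel_ext => s t; split; apply: le_sym.
Qed.

Lemma Theta_le_join x y z u v :
  Theta x z u v -> con_join (Theta x y) (Theta y z) u v.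
Proof.
apply: Theta_min (Cg_cong _) _ u v; apply: (cong_trans (Cg_cong _) (y := y)).
- by apply: con_join_l; exact: Theta_self.
- by apply: con_join_r; exact: Theta_self.
Qed.

Lemma permutable_comp_cong a b : permutable_congruences T ->
  is_congruence a -> is_congruence b ->
  is_congruence (fun x y => exists z, a x z /\ b z y).
Proof.
move=> perm congA congB; split.
- by move=> x; exists x; split; exact: cong_refl.
- move=> x y [z [axz bzy]]; apply/(perm _ _ congA congB).
  by exists z; split; apply: cong_sym.
- move=> x y w [z1 [a1 b1]] [z2 [a2 b2]].
  have [z [a3 b3]] : exists z, a z1 z /\ b z z2 by apply/(perm _ _ congA congB); exists y.
  by exists z; split; [apply: cong_trans a3 | apply: cong_trans b2].
- move=> x y x' y' [z1 [a1 b1]] [z2 [a2 b2]].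
  have [[_ _ _ ca] [_ _ _ cb]] := (congA, congB).
  have [ma ja] := ca _ _ _ _ a1 a2; have [mb jb] := cb _ _ _ _ b1 b2.
  by split; [exists (Order.meet z1 z2) | exists (Order.join z1 z2)].
Qed.

Lemma permutable_con_join a b x y : permutable_congruences T ->
  is_congruence a -> is_congruence b ->
  con_join a b x y -> exists z, a x z /\ b z y.
Proof.
move=> perm congA congB; apply: Cg_min (permutable_comp_cong perm congA congB) _ x y.
move=> u v [auv | buv]; [exists v | exists u]; split=> //; exact: cong_refl.
Qed.

End Congruences.

Arguments Theta_self {d T} x y.

Section Homomorphisms.
Context {d d' : Order.disp_t} {K : latticeType d} {L : latticeType d'} {f : K -> L}.
Hypothesis f_hom : lattice_hom f.

Lemma con_preimage_cong (C : L -> L -> Prop) :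
  is_congruence C -> is_congruence (fun x y => C (f x) (f y)).
Proof.
move=> congC; split.
- by move=> x; exact: cong_refl.
- by move=> x y; exact: cong_sym.
- by move=> x y z; exact: cong_trans.
- move=> x y x' y' Cx Cy; have [-> ->] := f_hom x y; have [-> ->] := f_hom x' y'.
  by case: congC => _ _ _; apply.
Qed.

Lemma con_map_Theta x y : con_map f (Theta x y) = Theta (f x) (f y).
Proof.
apply: rel_ext => u v; split.
- apply: Cg_min (Theta_cong _ _) _ u v => _ _ [a [b [Theta_ab [-> ->]]]].
  have := Theta_min (x := x) (y := y) (con_preimage_cong (Theta_cong (f x) (f y))).
  by apply; [exact: Theta_self | exact: Theta_ab].
- apply: Theta_min (Cg_cong _) _ u v; apply: Cg_gen.
  by exists x, y; split=> //; exact: Theta_self.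
Qed.

End Homomorphisms.

Definition o0 : 'I_3 := @Ordinal 3 0 isT.
Definition o1 : 'I_3 := @Ordinal 3 1 isT.
Definition o2 : 'I_3 := @Ordinal 3 2 isT.
Definition t0 : 'I_5 := @Ordinal 5 0 isT.
Definition t1 : 'I_5 := @Ordinal 5 1 isT.
Definition t2 : 'I_5 := @Ordinal 5 2 isT.
Definition t4 : 'I_5 := @Ordinal 5 4 isT.

Lemma DC0 : DC set0 = [set set0; setT].
Proof. by rewrite /DC eqxx. Qed.

Lemma DC1 i : DC [set i] = span (gS i).
Proof.
rewrite /DC.
have -> : ([set i] == set0) = false by apply/negbTE/set0Pn; exists i; rewrite inE.
have -> : ([set i] == setT) = false.
  by apply/negbTE/eqP => E; have := cards1 i; rewrite E cardsT card_ord.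
by rewrite cards1 eqxx big_set1.
Qed.

Lemma DC2 j : DC (~: [set j]) = span (gT j).
Proof.
have card2 : #|~: [set j]| = 2 by rewrite cardsC1 card_ord.
rewrite /DC.
have -> : (~: [set j] == set0) = false by apply/negbTE/eqP => E; rewrite E cards0 in card2.
have -> : (~: [set j] == setT) = false.
  by apply/negbTE/eqP => E; rewrite E cardsT card_ord in card2.
by rewrite card2 setCK big_set1.
Qed.

Lemma mem_span (G : {set {set 'I_5}}) Y : Y \in G -> Y \in span G.
Proof.
move=> YG; have -> : Y = \bigcup_(X in [set Y]) X by rewrite big_set1.
apply: imset_f.
by rewrite powersetE sub1set.
Qed.

Lemma span_gen_below (G : {set {set 'I_5}}) X k : X \in span G -> k \in X ->
  exists2 Y, Y \in G & (k \in Y) && (Y \subset X).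
Proof.
case/imsetP => A; rewrite powersetE => AG -> /bigcupP[Y YA kY].
by exists Y; [exact: (subsetP AG) | rewrite kY bigcup_sup].
Qed.

Lemma set4_cases (T : finType) (a b c e Y : T) :
  Y \in [set a; b; c; e] -> [\/ Y = a, Y = b, Y = c | Y = e].
Proof. by rewrite !inE -!orbA => /or4P[] /eqP ->; constructor. Qed.

Lemma span_gT0 X : X \in span (gT o0) -> t0 \notin X -> t1 \notin X -> t4 \notin X.
Proof.
move=> XT n0 n1; apply/negP => /(span_gen_below XT)[Y /set4_cases[] -> /[!inE] /andP[] //= _ sub];
[move: n0 | move: n1]; by rewrite (subsetP sub) // inE.
Qed.

Lemma span_gT1 X : X \in span (gT o1) -> t4 \notin X -> t1 \notin X.
Proof.
move=> XT n4; apply/negP => /(span_gen_below XT)[Y /set4_cases[] -> /[!inE] /andP[] //= _ sub];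
by move: n4; rewrite (subsetP sub) // inE.
Qed.

Lemma span_gT2 X : X \in span (gT o2) -> t0 \notin X -> t2 \notin X -> t4 \notin X.
Proof.
move=> XT n0 n2; apply/negP => /(span_gen_below XT)[Y /set4_cases[] -> /[!inE] /andP[] //= _ sub];
[move: n0 | move: n2]; by rewrite (subsetP sub) // inE.
Qed.

Definition alpha (i : 'I_3) : {set 'I_5} :=
  match nat_of_ord i with
  | 0 => s5 [:: 0; 1; 4]
  | 1 => s5 [:: 0; 3; 4]
  | _ => s5 [:: 0; 2; 4]
  end.

Definition beta (i : 'I_3) : {set 'I_5} :=
  match nat_of_ord i with
  | 0 => s5 [:: 2; 3; 4]
  | 1 => s5 [:: 1; 2; 4]
  | _ => s5 [:: 1; 3; 4]
  end.

Lemma gS_alpha_beta i : gS i = [set alpha i; beta i].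
Proof. by case: i => -[|[|[|]]]. Qed.

Lemma alpha_beta_cover i : alpha i :|: beta i = setT.
Proof. by apply/setP => -[[|[|[|[|[|k]]]]] hk]; case: i => -[|[|[|i]]] hi; rewrite !inE. Qed.

Section SetValuedDistance.
Variables (X : Type) (D : X -> X -> {set 'I_5}).
Hypothesis D_sym : forall x y, D x y = D y x.
Hypothesis D_triangle : forall x y z, D x z \subset D x y :|: D y z.

Lemma notin_D_trans k x y z : k \notin D x y -> k \notin D y z -> k \notin D x z.
Proof.
by move=> kxy kyz; apply: contra (subsetP (D_triangle x y z) k) _; rewrite inE negb_or kxy.
Qed.

Lemma Dc_obstruction (A B : X) (img : 'I_3 -> X -> Prop) :
  (forall i, exists c, [/\ img i c, D A c \subset alpha i & D c B \subset beta i]) ->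
  (forall i j k c c', k != i -> k != j -> img i c -> img j c' -> D c c' \in span (gT k)) ->
  t1 \notin D A B.
Proof.
move=> split_AB span_pair.
have [c0 [img0 A0 B0]] := split_AB o0.
have [c1 [img1 A1 B1]] := split_AB o1.
have [c2 [img2 A2 B2]] := split_AB o2.
have c0B_0 : t0 \notin D c0 B by apply/negP => /(subsetP B0); rewrite inE.
have c1B_0 : t0 \notin D c1 B by apply/negP => /(subsetP B1); rewrite inE.
have c2B_0 : t0 \notin D c2 B by apply/negP => /(subsetP B2); rewrite inE.
have c0B_1 : t1 \notin D c0 B by apply/negP => /(subsetP B0); rewrite inE.
have Ac1_1 : t1 \notin D A c1 by apply/negP => /(subsetP A1); rewrite inE.
have Ac2_1 : t1 \notin D A c2 by apply/negP => /(subsetP A2); rewrite inE.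
have Ac0_2 : t2 \notin D A c0 by apply/negP => /(subsetP A0); rewrite inE.
have Ac1_2 : t2 \notin D A c1 by apply/negP => /(subsetP A1); rewrite inE.
have c1c2_4 : t4 \notin D c1 c2.
  apply: (span_gT0 (span_pair o1 o2 o0 _ _ isT isT img1 img2)).
  - by apply: notin_D_trans c1B_0 _; rewrite D_sym.
  - by apply: notin_D_trans _ Ac2_1; rewrite D_sym.
have c0c1_4 : t4 \notin D c0 c1.
  apply: (span_gT2 (span_pair o0 o1 o2 _ _ isT isT img0 img1)).
  - by apply: notin_D_trans c0B_0 _; rewrite D_sym.
  - by apply: notin_D_trans _ Ac1_2; rewrite D_sym.
have c0c2_1 : t1 \notin D c0 c2.
  exact: (span_gT1 (span_pair o0 o2 o1 _ _ isT isT img0 img2) (notin_D_trans c0c1_4 c1c2_4)).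
by apply: notin_D_trans Ac2_1 _; apply: notin_D_trans _ c0B_1; rewrite D_sym.
Qed.

End SetValuedDistance.

Section Diagram.
Unset Implicit Arguments.
Variables (d : {set 'I_3} -> Order.disp_t) (L : forall p : {set 'I_3}, latticeType (d p))
  (f : forall p q : {set 'I_3}, L p -> L q)
  (phi : forall p : {set 'I_3}, (L p -> L p -> Prop) -> {set 'I_5}).
Set Implicit Arguments.
Hypothesis f_hom : forall p q : {set 'I_3}, p \subset q -> lattice_hom (f p q).
Hypothesis f_comp : forall (p q r : {set 'I_3}) (x : L p), p \subset q -> q \subset r ->
  f p r x = f q r (f p q x).
Hypothesis phi_in : forall (p : {set 'I_3}) th, compact_con th -> phi p th \in DC p.
Hypothesis phi_inj : forall (p : {set 'I_3}) th eta, compact_con th -> compact_con eta ->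
  phi p th = phi p eta -> th = eta.
Hypothesis phi_onto : forall (p : {set 'I_3}) X, X \in DC p ->
  exists th, compact_con th /\ phi p th = X.
Hypothesis phi_zero : forall p : {set 'I_3}, phi p (@con_zero _ (L p)) = set0.
Hypothesis phi_join : forall (p : {set 'I_3}) th eta, compact_con th -> compact_con eta ->
  phi p (con_join th eta) = phi p th :|: phi p eta.
Hypothesis phi_natural : forall (p q : {set 'I_3}) th, p \subset q -> compact_con th ->
  phi q (con_map (f p q) th) = phi p th.
Hypothesis K_permutable : forall i : 'I_3, permutable_congruences (L [set i]).

Lemma phi_subset (p : {set 'I_3}) (th eta : L p -> L p -> Prop) :
  compact_con th -> compact_con eta ->
  phi p th \subset phi p eta <-> (forall x y, th x y -> eta x y).
Proof.
move=> th_c eta_c; split=> [/setUidPr sub x y thxy | le_th_eta].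
- have <- : con_join th eta = eta.
    by apply: phi_inj => //; [exact: con_join_compact | rewrite phi_join].
  exact: con_join_l.
- by rewrite -(con_join_idPr (compact_con_cong eta_c) le_th_eta) phi_join ?subsetUl.
Qed.

Definition Delta (p : {set 'I_3}) (x y : L p) : {set 'I_5} := phi p (Theta x y).

Lemma Delta_map (p q : {set 'I_3}) (x y : L p) :
  p \subset q -> Delta (f p q x) (f p q y) = Delta x y.
Proof.
by move=> pq; rewrite /Delta -(con_map_Theta (f_hom pq)) phi_natural //; exact: Theta_compact.
Qed.

Lemma Delta_sym (p : {set 'I_3}) (x y : L p) : Delta x y = Delta y x.
Proof. by rewrite /Delta Theta_sym. Qed.

Lemma Delta_triangle (p : {set 'I_3}) (x y z : L p) :
  Delta x z \subset Delta x y :|: Delta y z.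
Proof.
rewrite /Delta -phi_join; try exact: Theta_compact.
apply/phi_subset; [exact: Theta_compact | exact/con_join_compact/Theta_compact/Theta_compact |].
exact: Theta_le_join.
Qed.

Lemma Delta_eq0 (p : {set 'I_3}) (x y : L p) : Delta x y = set0 -> x = y.
Proof.
move=> Delta0.
have E : Theta x y = @con_zero _ (L p).
  by apply: phi_inj; [exact: Theta_compact | exact: con_zero_compact | rewrite phi_zero].
by have := Theta_self x y; rewrite E.
Qed.

Lemma Delta_full : exists u v : L set0, Delta u v = setT.
Proof.
have [u [v neq_uv]] : exists u v : L set0, u <> v.
  apply: NNPP => all_eq.
  have [th [th_c phi_th]] : exists th, compact_con th /\ phi set0 th = setT.
    by apply: phi_onto; rewrite DC0 !inE eqxx orbT.
  have th0 : th = @con_zero _ (L set0).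
    apply: rel_ext => x y; split=> [_ | ->]; last exact: cong_refl (compact_con_cong th_c).
    by apply: NNPP => neq_xy; apply: all_eq; exists x, y.
  by move: (phi_zero set0); rewrite -th0 phi_th => /setP /(_ t0); rewrite !inE.
exists u, v; move: (phi_in (Theta_compact u v)); rewrite DC0 !inE.
by case/orP=> /eqP // /Delta_eq0.
Qed.

Lemma Delta_split (p : {set 'I_3}) (a b : {set 'I_5}) : permutable_congruences (L p) ->
  a \in DC p -> b \in DC p -> a :|: b = setT ->
  forall x y : L p, exists z, Delta x z \subset a /\ Delta z y \subset b.
Proof.
move=> perm /phi_onto[al [al_c <-]] /phi_onto[be [be_c <-]] cover x y.
have le_xy : forall s t, Theta x y s t -> con_join al be s t.
  apply/phi_subset; [exact: Theta_compact | exact: con_join_compact |].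
  by rewrite phi_join // cover subsetT.
have [z [al_xz be_zy]] := permutable_con_join perm
  (compact_con_cong al_c) (compact_con_cong be_c) (le_xy _ _ (Theta_self x y)).
exists z; split; (apply/phi_subset; first exact: Theta_compact; first by []).
- exact: Theta_min (compact_con_cong al_c) al_xz.
- exact: Theta_min (compact_con_cong be_c) be_zy.
Qed.

Definition from_K i (c : L setT) := exists z : L [set i], c = f [set i] setT z.

Lemma Delta_split_lift (u v : L set0) i : exists c, [/\ from_K i c,
  Delta (f set0 setT u) c \subset alpha i & Delta c (f set0 setT v) \subset beta i].
Proof.
have in_Si Y : Y \in [set alpha i; beta i] -> Y \in DC [set i].
  by rewrite DC1 gS_alpha_beta; exact: mem_span.
have [z [uz zv]] := Delta_split (K_permutable (i := i)) (in_Si _ (set21 _ _)) (in_Si _ (set22 _ _))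
  (alpha_beta_cover i) (f set0 [set i] u) (f set0 [set i] v).
exists (f [set i] setT z); split; first by exists z.
- by rewrite (f_comp u (sub0set [set i]) (subsetT _)) !Delta_map ?subsetT ?sub0set.
- by rewrite (f_comp v (sub0set [set i]) (subsetT _)) !Delta_map ?subsetT ?sub0set.
Qed.

Lemma Delta_from_K_span i j k c c' : k != i -> k != j -> from_K i c -> from_K j c' ->
  Delta c c' \in span (gT k).
Proof.
move=> ki kj [z ->] [z' ->].
have sub_i : [set i] \subset ~: [set k] by rewrite sub1set !inE eq_sym.
have sub_j : [set j] \subset ~: [set k] by rewrite sub1set !inE eq_sym.
rewrite (f_comp z sub_i (subsetT _)) (f_comp z' sub_j (subsetT _)) Delta_map ?subsetT //.
by rewrite -DC2; exact: phi_in (Theta_compact _ _).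
Qed.

Lemma Dc_not_lifted : False.
Proof.
have [u [v Delta_uv]] := Delta_full.
have := Dc_obstruction (@Delta_sym _) (@Delta_triangle _) (Delta_split_lift u v)
  Delta_from_K_span.
by rewrite Delta_map ?sub0set // Delta_uv inE.
Qed.

End Diagram.

Theorem theorem4p1
  (d : {set 'I_3} -> Order.disp_t)
  (L : forall p : {set 'I_3}, latticeType (d p))
  (f : forall p q : {set 'I_3}, L p -> L q)
  (phi : forall p : {set 'I_3}, (L p -> L p -> Prop) -> {set 'I_5}) :
  (* L is a cube-diagram of lattices and lattice homomorphisms *)
  (forall p q : {set 'I_3}, p \subset q -> lattice_hom (f p q)) ->
  (forall (p : {set 'I_3}) (x : L p), f p p x = x) ->
  (forall (p q r : {set 'I_3}) (x : L p), p \subset q -> q \subset r ->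
      f p r x = f q r (f p q x)) ->
  (* phi is a natural isomorphism Con_c o L ~= D_c of {\/,0}-semilattices *)
  (forall (p : {set 'I_3}) th, compact_con th -> phi p th \in DC p) ->
  (forall (p : {set 'I_3}) th eta, compact_con th -> compact_con eta ->
      phi p th = phi p eta -> th = eta) ->
  (forall (p : {set 'I_3}) X, X \in DC p -> exists th, compact_con th /\ phi p th = X) ->
  (forall p : {set 'I_3}, phi p (@con_zero _ (L p)) = set0) ->
  (forall (p : {set 'I_3}) th eta, compact_con th -> compact_con eta ->
      phi p (con_join th eta) = phi p th :|: phi p eta) ->
  (forall (p q : {set 'I_3}) th, p \subset q -> compact_con th ->
      phi q (con_map (f p q) th) = phi p th) ->
  (* K_0, K_1, K_2 have permutable congruences *)
  (forall i : 'I_3, permutable_congruences (L [set i])) ->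
  False.
Proof.
move=> f_hom _ f_comp phi_in phi_inj phi_onto phi_zero phi_join phi_natural K_perm.
exact: (Dc_not_lifted f_hom f_comp phi_in phi_inj phi_onto phi_zero phi_join phi_natural K_perm).
Qed.
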